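(* Let $G$ be a graph whose edges are coloured with colours $1$ and $2$, and let $A_1,A_2,B$ be pairwise disjoint subsets of $V(G)$. For $i=1,2$, suppose every vertex of $A_i$ is adjacent to every vertex of $B$ and all these edges between $A_i$ and $B$ have colour $i$; let $P_{A_i}$ be a non-empty path of colour $i$ in $G[A_i]$, and let $P_B^i$ be a (possibly empty) path of colour $i$ in $G[B]$. Suppose that (a) the vertex sets of $P_B^1$ and $P_B^2$ partition $B$, and (b) $|A_1\setminus V(P_{A_1})|+|A_2\setminus V(P_{A_2})|+2\le |B|$. Then $A_1\cup A_2\cup B$ can be partitioned into two monochromatic cycles, one of colour $1$ and one of colour $2$.
   Context: A path or cycle is of colour $i$ (monochromatic) if all its edges have colour $i$; a single vertex is a path of any colour, and a single vertex, a single edge, and the empty set are also considered to be cycles. *)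

From mathcomp Require Import all_boot.
Set Implicit Arguments. Unset Strict Implicit. Unset Printing Implicit Defensive.

(* A 2-edge-coloured simple graph on a finite vertex type T is given by the
   two relations e1 (edges of colour 1) and e2 (edges of colour 2); the edge
   set of G is e1 ∪ e2. *)
Definition simple_rel (T : finType) (e : rel T) : Prop :=
  symmetric e /\ irreflexive e.

Definition two_coloured_graph (T : finType) (e1 e2 : rel T) : Prop :=
  simple_rel e1 /\ simple_rel e2 /\ (forall x y, ~~ (e1 x y && e2 x y)).

(* A path (given by its sequence of vertices, possibly empty) all of whose
   edges lie in e.  A single vertex is a path of any colour. *)
Definition colour_path (T : finType) (e : rel T) (p : seq T) : bool :=
  uniq p && (if p is x :: q then path e x q else true).

(* A cycle whose edges all lie in e; the empty set, a single vertex and a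
   single edge are also considered cycles.  For size >= 3, [cycle e c] says
   consecutive vertices (cyclically) are e-adjacent; for size 2 it says the
   two vertices are e-adjacent (e symmetric). *)
Definition colour_cycle (T : finType) (e : rel T) (c : seq T) : bool :=
  uniq c && ((size c <= 1) || cycle e c).

From mathcomp Require Import all_boot zify.
Set Implicit Arguments. Unset Strict Implicit. Unset Printing Implicit Defensive.

(* Enumerate B as PB1 ++ PB2 and cut this sequence into a non-empty prefix S1
   (a colour-1 path), a middle part R1 ++ R2 with |Ri| = |Ai \ V(PAi)|, and a
   non-empty suffix S2 (a colour-2 path); condition (b) is exactly what makes
   room for this.  The colour-i cycle runs along PAi, then along Si, and then
   alternates between the vertices of Ai \ V(PAi) and those of Ri before
   returning to the start of PAi: every step between Ai and B is an edge of
   colour i because Ai and B are completely joined in colour i. *)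

Section ColourPath.
Variables (T : finType) (e : rel T).
Implicit Types s t : seq T.

Lemma colour_path_small s : size s <= 1 -> colour_path e s.
Proof. by case: s => [|x [|y s]]. Qed.

Lemma colour_path_uniq s : colour_path e s -> uniq s.
Proof. by case/andP. Qed.

Lemma colour_path_cat s t :
  colour_path e (s ++ t) -> colour_path e s /\ colour_path e t.
Proof.
rewrite /colour_path cat_uniq => /andP[/and3P[-> _ ->]].
case: s => [|x s] //=; case: t => [|y t]; rewrite ?cats0 //=.
by rewrite cat_path /= => /and3P[-> _ ->].
Qed.

Lemma colour_path_take n s : colour_path e s -> colour_path e (take n s).
Proof. by rewrite -{1}(cat_take_drop n s) => /colour_path_cat[]. Qed.

Lemma colour_path_drop n s : colour_path e s -> colour_path e (drop n s).
Proof. by rewrite -{1}(cat_take_drop n s) => /colour_path_cat[]. Qed.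

Lemma colour_path_take_cat n s t :
  colour_path e s -> n <= maxn (size s) 1 -> colour_path e (take n (s ++ t)).
Proof.
move=> es; case: (leqP n (size s)) => [le_ns _|lt_sn le_n1].
  by rewrite takel_cat //; apply: colour_path_take.
by apply: colour_path_small; rewrite size_take_min; lia.
Qed.

Lemma colour_path_drop_cat n s t :
  colour_path e t -> size (s ++ t) - n <= maxn (size t) 1 ->
  colour_path e (drop n (s ++ t)).
Proof.
move=> et; rewrite drop_cat size_cat; case: ltnP => [lt_ns le_n1|_ _].
  by apply: colour_path_small; rewrite size_cat size_drop; lia.
exact: colour_path_drop.
Qed.

End ColourPath.

Lemma split_cat_colour_paths (T : finType) (e e' : rel T) (s t : seq T) k :
  colour_path e s -> colour_path e' t -> k + 2 <= size (s ++ t) ->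
  exists S M S', [/\ s ++ t = S ++ M ++ S', size M = k,
                     (S != [::]) && colour_path e S &
                     (S' != [::]) && colour_path e' S'].
Proof.
move=> es e't; rewrite size_cat => le_k2.
have neq_nil (u : seq T) : (u != [::]) = (0 < size u) by case: u.
(* The prefix lies inside s unless s is empty, and then it has length 1;
   symmetrically for the suffix. *)
pose p := maxn 1 (minn (size s) (size s + size t - k - 1)).
have [lt_pk_st p_gt0 le_p_s le_rest_t] : [/\ p + k < size s + size t, 0 < p,
    p <= maxn (size s) 1 & size s + size t - (k + p) <= maxn (size t) 1].
  by rewrite /p; split; lia.
exists (take p (s ++ t)), (take k (drop p (s ++ t))), (drop (k + p) (s ++ t)).
split.
- by rewrite -drop_drop !cat_take_drop.
- by rewrite size_takel // size_drop size_cat; lia.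
- by rewrite neq_nil size_take_min colour_path_take_cat ?andbT ?size_cat //; lia.
- by rewrite neq_nil size_drop colour_path_drop_cat ?andbT ?size_cat //; lia.
Qed.

Fixpoint interleave (T : Type) (s t : seq T) : seq T :=
  if (s, t) is (x :: s', y :: t') then x :: y :: interleave s' t' else [::].

Lemma count_interleave (T : Type) (a : pred T) (s t : seq T) :
  size s = size t -> count a (interleave s t) = count a s + count a t.
Proof. by elim: s t => [|x s IHs] [|y t] //= [/IHs ->]; lia. Qed.

Section CompleteBipartiteCycle.
Variables (T : finType) (e : rel T) (A B : {pred T}).
Hypotheses (e_sym : symmetric e) (e_AB : {in A & B, forall a b, e a b}).

Lemma path_interleave x L R y :
  size L = size R -> all [in A] L -> all [in B] R -> x \in B -> y \in A ->
  path e x (rcons (interleave L R) y).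
Proof.
elim: L R x => [|a L IHL] [|b R] //= x.
  by move=> _ _ _ xB yA; rewrite e_sym e_AB.
move=> [sLR] /andP[aA LA] /andP[bB RB] xB yA.
by rewrite e_sym e_AB // e_AB // IHL.
Qed.

Lemma colour_cycle_interleave P S L R :
  P != [::] -> colour_path e P -> {subset P <= A} ->
  S != [::] -> colour_path e S -> {subset S <= B} ->
  size L = size R -> {subset L <= A} -> {subset R <= B} ->
  uniq (P ++ S ++ interleave L R) -> colour_cycle e (P ++ S ++ interleave L R).
Proof.
case: P => [|x P] // _ /andP[_ eP] PA; case: S => [|y S] // _ /andP[_ eS] SB.
move=> sLR LA RB uPSI; rewrite /colour_cycle uPSI; apply/orP; right.
rewrite /= rcons_cat cat_path eP /= rcons_cat cat_path eS /=.
rewrite e_AB ?PA ?SB ?mem_last ?mem_head //=.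
by apply: path_interleave; rewrite ?SB ?PA ?mem_last ?mem_head //; apply/allP.
Qed.

End CompleteBipartiteCycle.

Section EnumPartition.
Variable T : finType.
Implicit Types (A B C : {set T}) (s t : seq T).

Lemma perm_cat_enum A s t :
  uniq s -> uniq t -> [disjoint s & t] -> {subset s <= A} -> {subset t <= A} ->
  {in A, forall x, (x \in s) || (x \in t)} -> perm_eq (s ++ t) (enum A).
Proof.
move=> us ut dst sA tA Ast; apply: uniq_perm; rewrite ?enum_uniq //.
  by rewrite cat_uniq us ut -disjoint_has disjoint_sym dst.
move=> x; rewrite mem_cat mem_enum.
by apply/idP/idP => [/orP[/sA|/tA] //|/Ast].
Qed.

Lemma perm_cat_enum_setD A s :
  uniq s -> {subset s <= A} -> perm_eq (s ++ enum (A :\: [set x in s])) (enum A).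
Proof.
move=> us sA; apply: perm_cat_enum; rewrite ?enum_uniq //.
- by rewrite disjoint_sym disjoint_has; apply/hasPn => x; rewrite mem_enum !inE => /andP[].
- by move=> x; rewrite mem_enum inE => /andP[].
- by move=> x xA; rewrite mem_enum !inE xA andbT orbN.
Qed.

Lemma perm_enum_setU A B :
  [disjoint A & B] -> perm_eq (enum (A :|: B)) (enum A ++ enum B).
Proof.
move=> dAB; rewrite perm_sym perm_cat_enum ?enum_uniq //.
- by rewrite (eq_disjoint (mem_enum _)) (eq_disjoint_r (mem_enum _)).
- by move=> x; rewrite mem_enum !inE => ->.
- by move=> x; rewrite mem_enum !inE => ->; rewrite orbT.
- by move=> x; rewrite !mem_enum inE.
Qed.

Lemma perm_enum_setU3 A B C :
  [disjoint A & B] -> [disjoint A & C] -> [disjoint B & C] ->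
  perm_eq (enum (A :|: B :|: C)) (enum A ++ enum B ++ enum C).
Proof.
move=> dAB dAC dBC; have dAB_C : [disjoint A :|: B & C].
  by rewrite disjoints_subset subUset -!disjoints_subset dAC dBC.
by rewrite (permPl (perm_enum_setU dAB_C)) (perm_catr _ (perm_enum_setU dAB)) catA.
Qed.

Lemma perm_enum_cat_partition A s t :
  perm_eq (s ++ t) (enum A) ->
  [/\ uniq s, uniq t, [disjoint s & t] & forall x, (x \in A) = (x \in s) || (x \in t)].
Proof.
move=> stA; have := enum_uniq A; rewrite -(perm_uniq stA) cat_uniq.
case/and3P=> -> dst ->; split=> //; first by rewrite disjoint_sym disjoint_has.
by move=> x; rewrite -mem_enum -(perm_mem stA) mem_cat.
Qed.

End EnumPartition.

Theorem lemma3p4 (T : finType) (e1 e2 : rel T)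
  (A1 A2 B : {set T}) (PA1 PA2 PB1 PB2 : seq T) :
  two_coloured_graph e1 e2 ->
  [disjoint A1 & A2] -> [disjoint A1 & B] -> [disjoint A2 & B] ->
  (forall a b, a \in A1 -> b \in B -> e1 a b) ->
  (forall a b, a \in A2 -> b \in B -> e2 a b) ->
  PA1 != [::] -> colour_path e1 PA1 -> {subset PA1 <= A1} ->
  PA2 != [::] -> colour_path e2 PA2 -> {subset PA2 <= A2} ->
  colour_path e1 PB1 -> {subset PB1 <= B} ->
  colour_path e2 PB2 -> {subset PB2 <= B} ->
  (* (a) *)
  [disjoint PB1 & PB2] -> (forall x, x \in B -> (x \in PB1) || (x \in PB2)) ->
  (* (b) *)
  #|A1 :\: [set x in PA1]| + #|A2 :\: [set x in PA2]| + 2 <= #|B| ->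
  exists C1 C2 : seq T,
    [/\ colour_cycle e1 C1, colour_cycle e2 C2, [disjoint C1 & C2] &
        forall x, (x \in A1 :|: A2 :|: B) = (x \in C1) || (x \in C2)].
Proof.
move=> [[e1_sym _] [[e2_sym _] _]] dA12 dA1B dA2B e1_A1B e2_A2B
  nPA1 ePA1 PA1_A1 nPA2 ePA2 PA2_A2 ePB1 PB1_B ePB2 PB2_B dPB PB_cover le_card.
set D1 := A1 :\: [set x in PA1]; set D2 := A2 :\: [set x in PA2].
have permB : perm_eq (PB1 ++ PB2) (enum B) := perm_cat_enum
  (colour_path_uniq ePB1) (colour_path_uniq ePB2) dPB PB1_B PB2_B PB_cover.
have le_size : #|D1| + #|D2| + 2 <= size (PB1 ++ PB2).
  by rewrite (perm_size permB) -cardE.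
have [S1 [M [S2 [eW sM /andP[nS1 eS1] /andP[nS2 eS2]]]]] :=
  split_cat_colour_paths ePB1 ePB2 le_size.
have [S1B MB S2B] : [/\ {subset S1 <= B}, {subset M <= B} & {subset S2 <= B}].
  by split=> x x_in; rewrite -mem_enum -(perm_mem permB) eW !mem_cat x_in ?orbT.
have D_A (A : {set T}) s : {subset enum (A :\: [set x in s]) <= A}.
  by move=> x; rewrite mem_enum inE => /andP[].
set R1 := take #|D1| M; set R2 := drop #|D1| M.
have sR1 : size (enum D1) = size R1 by rewrite -cardE size_takel // sM leq_addr.
have sR2 : size (enum D2) = size R2 by rewrite size_drop sM !cardE addKn.
set C1 := PA1 ++ S1 ++ interleave (enum D1) R1.
set C2 := PA2 ++ S2 ++ interleave (enum D2) R2.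
have permC : perm_eq (C1 ++ C2) (enum (A1 :|: A2 :|: B)).
  rewrite (permPr (perm_enum_setU3 dA12 dA1B dA2B)) perm_sym.
  rewrite -(permPl (perm_cat (perm_cat_enum_setD (colour_path_uniq ePA1) PA1_A1)
    (perm_cat (perm_cat_enum_setD (colour_path_uniq ePA2) PA2_A2) permB))).
  apply/permP => a; rewrite eW -(cat_take_drop #|D1| M) -/R1 -/R2 -/D1 -/D2.
  rewrite !count_cat (count_interleave _ sR1) (count_interleave _ sR2).
  set c := count a; move: (c PA1) (c PA2) (c S1) (c S2) (c R1) (c R2).
  by move: (c (enum D1)) (c (enum D2)); clear=> *; lia.
have [uC1 uC2 dC memC] := perm_enum_cat_partition permC.
exists C1, C2; split=> //.
- apply: (colour_cycle_interleave e1_sym e1_A1B) => //; first exact: D_A.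
  by move=> x /mem_take /MB.
- apply: (colour_cycle_interleave e2_sym e2_A2B) => //; first exact: D_A.
  by move=> x /mem_drop /MB.
Qed.
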